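(* Let $(X,\Sigma)$ be a measurable space, $(\mathcal{E}_t)_{t\ge0}$ a process of pavings, $\mathscr{A}=\{\mathsf{A}_t(\cdot|E)\colon E\in\mathcal{E}_t,\,t\ge0\}$ a parametric family of conditional aggregation operators, $f\in\mathbf{F}$ and $\boldsymbol{\mu}=(\mu_t)_{t\ge0}$ a family of monotone measures on $\Sigma$. Then: (a) for fixed $t\ge0$, $\boldsymbol{\mu}_{\mathscr{A}}(f,t)=0$ if and only if $\mu_t(E)=0$ for every $E\in\mathcal{E}_t^0$ such that $\mathsf{A}_t(f|E)\ge t$; (b) if $\mathsf{A}_t(\lambda\mathbf{1}_X|E)\le\lambda$ for every $E\in\mathcal{E}_t^0$ and all $t,\lambda\ge0$, then there exists $b>0$ such that $\boldsymbol{\mu}_{\mathscr{A}}(f,t)=0$ for each $t>b$.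
   Context: $\Sigma^0=\Sigma\setminus\{\emptyset\}$. $\mathbf{F}$ denotes the set of all $\Sigma$-measurable, nonnegative, bounded functions $f\colon X\to[0,\infty)$. A monotone measure is a map $\mu\colon\Sigma\to[0,\infty]$ with $\mu(B)\le\mu(C)$ whenever $B\subseteq C$, $\mu(\emptyset)=0$ and $\mu(X)>0$. For $E\in\Sigma^0$, a conditional aggregation operator (CAO) w.r.t. $E$ is a map $\mathsf{A}(\cdot|E)\colon\mathbf{F}\to[0,\infty]$ such that (C1) $\mathsf{A}(f|E)\le\mathsf{A}(g|E)$ whenever $f(x)\le g(x)$ for all $x\in E$, and (C2) $\mathsf{A}(\mathbf{1}_{X\setminus E}|E)=0$. A process of pavings is a family $(\mathcal{E}_t)_{t\ge0}$ with $\emptyset\in\mathcal{E}_t\subseteq\Sigma$ for all $t$; $\mathcal{E}_t^0=\mathcal{E}_t\setminus\{\emptyset\}$. A parametric family of CAOs (pFCA) $\{\mathsf{A}_t(\cdot|E)\colon E\in\mathcal{E}_t,\,t\ge0\}$ consists of CAOs $\mathsf{A}_t(\cdot|E)$ w.r.t. $E$ for each $t$ and $E\in\mathcal{E}_t^0$, with the convention $\mathsf{A}_t(\cdot|\emptyset)=\infty$. The generalized level measure is $\boldsymbol{\mu}_{\mathscr{A}}(f,t)=\sup\{\mu_t(E)\colon \mathsf{A}_t(f|E)\ge t,\ E\in\mathcal{E}_t\}$ for $t\ge0$. *)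

From mathcomp Require Import all_boot all_order all_algebra.
From mathcomp Require Import all_classical all_reals all_analysis.
Set Implicit Arguments. Unset Strict Implicit. Unset Printing Implicit Defensive.
Import Order.TTheory GRing.Theory Num.Theory.
Local Open Scope classical_set_scope.
Local Open Scope ring_scope.
Local Open Scope ereal_scope.

Section Defs.
Context {d : measure_display} {X : measurableType d} {R : realType}.

Definition inF (f : X -> R) : Prop :=
  measurable_fun setT f /\ (forall x, (0 <= f x)%R) /\
  exists M : R, forall x, (f x <= M)%R.

Definition monotone_measure (mu : set X -> \bar R) : Prop :=
  (forall B, 0 <= mu B) /\
  (forall B C, measurable B -> measurable C -> B `<=` C -> mu B <= mu C) /\
  mu set0 = 0 /\ 0 < mu setT.

Definition CAO (A : (X -> R) -> \bar R) (E : set X) : Prop :=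
  (forall f, inF f -> 0 <= A f) /\
  (forall f g, inF f -> inF g -> (forall x, E x -> (f x <= g x)%R) -> A f <= A g) /\
  A (\1_(~` E) : X -> R) = 0.

Definition paving_process (Ecal : R -> set (set X)) : Prop :=
  forall t, (0 <= t)%R -> Ecal t set0 /\ Ecal t `<=` measurable.

(* parametric family of CAOs, with the convention A_t(.|emptyset) = +oo *)
Definition pFCA (Ecal : R -> set (set X)) (A : R -> set X -> (X -> R) -> \bar R)
  : Prop :=
  forall t, (0 <= t)%R ->
    (forall E, Ecal t E -> E <> set0 -> CAO (A t E) E) /\
    (forall f, A t set0 f = +oo).

Definition level_measure (Ecal : R -> set (set X))
  (A : R -> set X -> (X -> R) -> \bar R) (mu : R -> set X -> \bar R)
  (f : X -> R) (t : R) : \bar R :=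
  ereal_sup [set mu t E | E in [set E | Ecal t E /\ t%:E <= A t E f]].

End Defs.

From mathcomp Require Import all_boot all_order all_algebra.
From mathcomp Require Import all_classical all_reals all_analysis.
Import Order.TTheory GRing.Theory Num.Theory.
Local Open Scope classical_set_scope.
Local Open Scope ring_scope.
Local Open Scope ereal_scope.

(** (a) The empty set always competes in the supremum defining the level
    measure (its aggregation is [+oo >= t]) and contributes [mu_t(set0) = 0];
    so the supremum of these nonnegative values vanishes iff every nonempty
    competitor has measure zero.
    (b) For [t] above a nonnegative bound [M] of [f], monotonicity of the CAO
    and [A_t(M 1_X | E) <= M] give [A_t(f|E) <= M < t], so no nonempty set
    competes and (a) applies. *)

Section LevelMeasure.
Context {d : measure_display} {X : measurableType d} {R : realType}.
Implicit Types (Ecal : R -> set (set X)) (A : R -> set X -> (X -> R) -> \bar R)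
  (mu : R -> set X -> \bar R) (f : X -> R).

Lemma inF_cst (c : R) : (0 <= c)%R -> inF (fun _ : X => c).
Proof. by move=> c0; split; [exact: measurable_cst | split=> //; exists c]. Qed.

Lemma inF_ub_ge0 {f} : inF f -> exists2 M : R, (0 <= M)%R & forall x, (f x <= M)%R.
Proof.
move=> [_ [_ [M fM]]]; exists (Num.max M 0%R); first by rewrite le_max lexx orbT.
by move=> x; rewrite le_max fM.
Qed.

Lemma CAO_le_cst {Ag : (X -> R) -> \bar R} {E : set X} {f} {M : R} :
  CAO Ag E -> inF f -> (0 <= M)%R -> (forall x, E x -> (f x <= M)%R) ->
  Ag (fun _ => M) <= M%:E -> Ag f <= M%:E.
Proof.
move=> [_ [Amono _]] fF M0 fM AM.
apply: le_trans AM; apply: Amono fM => //; exact: inF_cst.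
Qed.

Lemma level_measure_eq0 Ecal A mu f (t : R) :
  Ecal t set0 -> A t set0 f = +oo ->
  (forall B, 0 <= mu t B) -> mu t set0 = 0 ->
  level_measure Ecal A mu f t = 0 <->
  (forall E, Ecal t E -> E <> set0 -> t%:E <= A t E f -> mu t E = 0).
Proof.
move=> Ecal0 A0 mu_ge0 mu0; split.
- move=> lm0 E EcalE _ tAE; apply/eqP; rewrite eq_le mu_ge0 andbT -lm0.
  by apply: ereal_sup_ubound; exists E.
- move=> null; apply/eqP; rewrite eq_le; apply/andP; split.
  + apply: ge_ereal_sup => _ [E [EcalE tAE] <-].
    have [->|/eqP E0] := eqVneq E set0; first by rewrite mu0.
    by rewrite (null E).
  + by apply: ereal_sup_ubound; exists set0; rewrite //= A0 leey.
Qed.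

End LevelMeasure.

Theorem proposition3p7 (d : measure_display) (X : measurableType d) (R : realType)
  (Ecal : R -> set (set X)) (A : R -> set X -> (X -> R) -> \bar R)
  (mu : R -> set X -> \bar R) (f : X -> R) :
  paving_process Ecal -> pFCA Ecal A -> inF f ->
  (forall t, (0 <= t)%R -> monotone_measure (mu t)) ->
  (forall t, (0 <= t)%R ->
     (level_measure Ecal A mu f t = 0 <->
      (forall E, Ecal t E -> E <> set0 -> t%:E <= A t E f -> mu t E = 0))) /\
  ((forall t lam, (0 <= t)%R -> (0 <= lam)%R ->
      forall E, Ecal t E -> E <> set0 -> A t E (fun _ => lam) <= lam%:E) ->
   exists b : R, (0 < b)%R /\
     forall t, (b < t)%R -> level_measure Ecal A mu f t = 0).
Proof.
move=> Epav Afam fF mu_mono.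
have partA t : (0 <= t)%R -> level_measure Ecal A mu f t = 0 <->
    (forall E, Ecal t E -> E <> set0 -> t%:E <= A t E f -> mu t E = 0).
  move=> t0; have [mu_ge0 [_ [mu0 _]]] := mu_mono t t0.
  apply: level_measure_eq0 => //; first by have [] := Epav t t0.
  by have [_ ->] := Afam t t0.
split=> // A_cst; have [M M0 fM] := inF_ub_ge0 fF.
exists (M + 1)%R; split=> [|t Mt]; first exact: ltr_wpDl M0 ltr01.
have t0 : (0 <= t)%R by apply/ltW/le_lt_trans/Mt; exact: addr_ge0.
apply/(partA t t0) => E EcalE E0 tAE; exfalso.
have AfM : A t E f <= M%:E.
  have [A_CAO _] := Afam t t0.
  by apply: CAO_le_cst (A_CAO E EcalE E0) fF M0 _ (A_cst t M t0 M0 E EcalE E0).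
have := le_trans tAE AfM; rewrite lee_fin => tM.
by have := lt_le_trans Mt tM; rewrite ltNge lerDl ler01.
Qed.
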